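(* Let $\varepsilon>0$ be a constant, $C=12/\varepsilon$, $c=1/(8e)$, and let $k\geq 2$ be a constant integer. Let $G=(V,E)$ be a graph on $n$ vertices with $\delta(G)\geq\left(\frac12+\varepsilon\right)n$, and let $L\subseteq V$ be a set with $|L|\leq C\log n$ such that every pair of distinct vertices of $V\setminus L$ has at least $12\log n$ common $G$-neighbors in $L$. Let $G_k'$ be the subgraph of $G_k$ induced by $V\setminus L$. Then with high probability: every component of $G_k'$ has at least $cn$ vertices, and moreover, for every set $A$ of $k-1$ vertices, removing $A$ from $G_k'$ produces a graph each of whose components is either an isolated vertex or has at least $cn$ vertices.
   Context: The random graph $G_k$ on vertex set $V$: each vertex $v\in V$ independently makes $k$ choices, each uniformly at random from the $G$-neighborhood of $v$ (with replacement), and $G_k$ has edge $\{v,w\}$ whenever $v$ chose $w$ or $w$ chose $v$. ''With high probability'' means with probability tending to $1$ as $n\to\infty$. $\log$ is the natural logarithm. *)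

From Stdlib Require Import Reals.
From mathcomp Require Import all_boot.
Set Implicit Arguments. Unset Strict Implicit. Unset Printing Implicit Defensive.

Open Scope R_scope.

Definition Rleb (a b : R) : bool := if Rle_dec a b then true else false.

Definition nbhd (n : nat) (e : rel 'I_n) (v : 'I_n) : {set 'I_n} :=
  [set w | e v w].

(* An outcome of the random process: vertex v's i-th choice is w v i. *)
Definition choices (n k : nat) := {ffun 'I_n -> {ffun 'I_k -> 'I_n}}.

(* Sample space: every choice of v lies in the G-neighbourhood of v.
   The process (independent uniform choices with replacement) is exactly
   the uniform distribution on this product set. *)
Definition Omega (n k : nat) (e : rel 'I_n) : {set choices n k} :=
  [set w : choices n k | [forall v, forall i, e v (w v i)]].

Definition prob (n k : nat) (e : rel 'I_n) (E : pred (choices n k)) : R :=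
  INR #|[set w in @Omega n k e | E w]| / INR #|@Omega n k e|.

Definition gk (n k : nat) (w : choices n k) : rel 'I_n :=
  fun v u => [exists i, w v i == u] || [exists i, w u i == v].

Definition induced (n : nat) (S : {set 'I_n}) (r : rel 'I_n) : rel 'I_n :=
  fun x y => [&& x \in S, y \in S & r x y].

Definition comp (n : nat) (S : {set 'I_n}) (r : rel 'I_n) (v : 'I_n) : {set 'I_n} :=
  [set u | connect (induced S r) v u].

Definition c_const : R := / (8 * exp 1).

Definition good_event (n k : nat) (L : {set 'I_n}) (w : choices n k) : bool :=
  let S := ~: L in
  let r := gk w in
  [forall v in S, Rleb (c_const * INR n) (INR #|comp S r v|)] &&
  [forall A : {set 'I_n}, ((A \subset S) && (#|A| == k.-1)) ==>
     [forall v in S :\: A,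
        (#|comp (S :\: A) r v| == 1)%N || Rleb (c_const * INR n) (INR #|comp (S :\: A) r v|)]].

(* If the good event fails, then for some set [A] of vertices, empty or of size
   [k - 1], some component [T] of [G_k' - A] has [1 <= s < c n] vertices (and [s >= 2]
   when [A] is nonempty); every choice made by a vertex of [T] then stays inside
   [T :|: L :|: A]. All neighbourhoods have at least [n/2] vertices, so for a fixed pair
   [(A, T)] this happens with probability at most [(2 (s + |L| + k) / n) ^ (k s)].
   Summing over all pairs: isolated vertices contribute [O(polylog n / n)] because
   [k >= 2], sets [T] of polylogarithmic size contribute [O(polylog n / n)] in total,
   and each larger size [s < c n] contributes at most [n ^ -3], by
   [C(n, s) <= (e n / s) ^ s] and the choice [c = 1/(8e)]. *)

From HB Require Import structures.
From Stdlib Require Import Reals Lra Lia.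
From mathcomp Require Import all_boot zify.
Open Scope R_scope.

(** * Elementary estimates *)

Lemma exp_le_exp (a b : R) : a <= b -> exp a <= exp b.
Proof. by case/Rle_lt_or_eq_dec => [/exp_increasing|->]; lra. Qed.

Lemma exp_pow (x : R) (j : nat) : exp x ^ j = exp (INR j * x).
Proof.
elim: j => [|j IH]; first by rewrite /= Rmult_0_l exp_0.
by rewrite S_INR /= IH -exp_plus; f_equal; ring.
Qed.

Lemma pow_div_le_exp (x : R) (j : nat) : 0 <= x -> (0 < j)%N -> (x / INR j) ^ j <= exp x.
Proof.
move=> hx hj; have hJ : 0 < INR j by apply: lt_0_INR; apply/ltP.
have -> : exp x = exp (x / INR j) ^ j by rewrite exp_pow; f_equal; field; lra.
apply: pow_incr; split; first by apply: Rmult_le_pos; [lra | left; apply: Rinv_0_lt_compat].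
have := exp_ineq1_le (x / INR j); lra.
Qed.

Lemma pow_le_one (z : R) (j : nat) : 0 <= z <= 1 -> z ^ j <= 1.
Proof.
move=> [h0 h1]; elim: j => [|j IH] /=; first lra.
have := pow_le z j h0; nra.
Qed.

Lemma pow_antitone (z : R) (i j : nat) : 0 <= z <= 1 -> (i <= j)%N -> z ^ j <= z ^ i.
Proof.
move=> hz /subnK <-; rewrite pow_add.
have := @pow_le_one z (j - i) hz; have := pow_le z i (proj1 hz); nra.
Qed.

Lemma INR_expn (a j : nat) : INR (a ^ j)%N = INR a ^ j.
Proof. by elim: j => [|j IH] //; rewrite expnS mult_INR IH. Qed.

Lemma exp1_gt2 : 2 < exp 1.
Proof. have := exp_ineq1 1; lra. Qed.

Lemma pow_self_le_exp_fact (s : nat) : INR s ^ s <= exp (INR s) * INR s`!.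
Proof.
elim: s => [|s IH]; first by rewrite /= exp_0; lra.
have hstep : INR s.+1 ^ s <= exp 1 * INR s ^ s.
  case: s IH => [|s] IH; first by rewrite /=; have := exp1_gt2; lra.
  have hs : 0 < INR s.+1 by apply: lt_0_INR; lia.
  have -> : INR s.+2 = INR s.+1 * (1 + / INR s.+1) by rewrite (S_INR s.+1); field; lra.
  have he : (1 + / INR s.+1) ^ s.+1 <= exp 1.
    have -> : exp 1 = exp (/ INR s.+1) ^ s.+1 by rewrite exp_pow; f_equal; field; lra.
    apply: pow_incr; split.
      by have := Rinv_0_lt_compat _ hs; lra.
    exact: exp_ineq1_le.
  rewrite Rpow_mult_distr; have := pow_le (INR s.+1) s.+1 (ltac:(lra)); nra.
have hs1 := pos_INR s.+1; have he := exp_pos 1.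
rewrite factS mult_INR S_INR exp_plus -S_INR [INR s.+1 ^ s.+1]/=.
apply: Rle_trans (_ : INR s.+1 * (exp 1 * (exp (INR s) * INR s`!)) <= _); last by right; ring.
apply: Rmult_le_compat_l => //; apply: Rle_trans hstep _; apply: Rmult_le_compat_l; lra.
Qed.

Lemma ffact_le_expn (n m : nat) : (n ^_ m <= n ^ m)%N.
Proof.
rewrite ffact_prod -[X in (_ <= _ ^ X)%N](card_ord m) -prod_nat_const.
by apply: leq_prod => i _; apply: leq_subr.
Qed.

Lemma binomial_le_pow (n s : nat) : INR 'C(n, s) <= INR n ^ s.
Proof.
rewrite -INR_expn; apply: le_INR; apply/leP; apply: leq_trans (ffact_le_expn n s).
by rewrite -bin_ffact leq_pmulr ?fact_gt0.
Qed.

Lemma binomial_le_exp_pow (n s : nat) : (0 < s)%N ->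
  INR 'C(n, s) <= (exp 1 * INR n / INR s) ^ s.
Proof.
move=> hs; have hS : 0 < INR s ^ s by apply: pow_lt; apply: lt_0_INR; apply/ltP.
have hbin : INR 'C(n, s) * INR s`! <= INR n ^ s.
  rewrite -mult_INR -INR_expn; apply: le_INR; apply/leP.
  by rewrite multE bin_ffact; apply: ffact_le_expn.
have hfact := pow_self_le_exp_fact s.
have hC := pos_INR 'C(n, s); have hE := exp_pos (INR s).
have : INR 'C(n, s) * INR s ^ s <= exp (INR s) * INR n ^ s by nra.
rewrite /Rdiv !Rpow_mult_distr exp_pow Rmult_1_r pow_inv => h.
apply: (Rmult_le_reg_r (INR s ^ s)) => //.
by rewrite Rmult_assoc Rinv_l; lra.
Qed.

Lemma RplusA : associative Rplus.
Proof. by move=> x y z; rewrite Rplus_assoc. Qed.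

HB.instance Definition _ :=
  Monoid.isComLaw.Build R 0 Rplus RplusA Rplus_comm Rplus_0_l.
HB.instance Definition _ := Monoid.isMulLaw.Build R 0 Rmult Rmult_0_l Rmult_0_r.
HB.instance Definition _ :=
  Monoid.isAddLaw.Build R Rmult Rplus Rmult_plus_distr_r Rmult_plus_distr_l.

Section RealSums.
Variable I : finType.

Lemma big_Rle (P : pred I) (F G : I -> R) :
  (forall i, P i -> F i <= G i) ->
  \big[Rplus/0]_(i | P i) F i <= \big[Rplus/0]_(i | P i) G i.
Proof. by move=> h; elim/big_ind2: _ => // *; lra. Qed.

Lemma big_Rle_sub (P : pred I) (F : I -> R) :
  (forall i, 0 <= F i) -> \big[Rplus/0]_(i | P i) F i <= \big[Rplus/0]_i F i.
Proof.
move=> h; rewrite big_mkcond /=; apply: big_Rle => i _.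
by case: (P i); [lra | apply: h].
Qed.

Lemma big_Rconst (P : pred I) (c : R) : \big[Rplus/0]_(i | P i) c = INR #|P| * c.
Proof.
rewrite big_const; elim: #|P| => [|j IH]; first by rewrite /=; ring.
by rewrite iterS IH S_INR; ring.
Qed.

Lemma big_Ror (P Q : pred I) (F : I -> R) :
  (forall i, 0 <= F i) ->
  \big[Rplus/0]_(i | P i || Q i) F i <=
  \big[Rplus/0]_(i | P i) F i + \big[Rplus/0]_(i | Q i) F i.
Proof.
move=> h; rewrite !(big_mkcond _ F) -big_split /=.
by apply: big_Rle => i _; have := h i; case: (P i); case: (Q i) => /=; lra.
Qed.

End RealSums.

(** * The union bound tends to zero *)

(* A fixed set [T] of [s] vertices all of whose [k s] choices fall into [T :|: X],
   with [#|X| <= m], has probability at most this: each choice is uniform in a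
   neighbourhood of size [>= n/2]. *)
Definition confine_bound (n k : nat) (m : R) (s : nat) : R :=
  (2 * (INR s + m) / INR n) ^ (k * s).

Lemma confine_bound_ge0 (n k : nat) (m : R) (s : nat) :
  0 < INR n -> 0 <= m -> 0 <= confine_bound n k m s.
Proof.
move=> hn hm; apply: pow_le; apply: Rmult_le_pos; first by have := pos_INR s; lra.
by left; apply: Rinv_0_lt_compat.
Qed.

Lemma confine_bound_le (n k s : nat) (m y : R) :
  0 < INR n -> 0 <= m -> 2 * (INR s + m) <= y ->
  confine_bound n k m s <= (y / INR n) ^ (k * s).
Proof.
move=> hn hm hy; have hs := pos_INR s; have hi := Rinv_0_lt_compat _ hn.
apply: pow_incr; split; first by apply: Rmult_le_pos; lra.
by apply: Rmult_le_compat_r; lra.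
Qed.

Lemma pow_mul_pow_div (N x : R) (k s : nat) : 0 < N -> (0 < k)%N ->
  N ^ s * (x / N) ^ (k * s) = (x ^ k / N ^ k.-1) ^ s.
Proof.
move=> hN hk; have hM : N ^ k.-1 <> 0 by apply: pow_nonzero; lra.
rewrite pow_mult -Rpow_mult_distr; f_equal.
rewrite /Rdiv Rpow_mult_distr pow_inv -[in N ^ k](prednK hk) /=.
by field; split; lra.
Qed.

Lemma singleton_term_le (n k : nat) (m x : R) :
  (1 <= n)%N -> (2 <= k)%N -> 0 <= m -> 2 * (1 + m) <= x ->
  INR n * confine_bound n k m 1 <= x ^ k / INR n.
Proof.
move=> hn hk hm hx.
have hN : 1 <= INR n by apply: (le_INR 1); apply/leP.
have hxk : 0 <= x ^ k by apply: pow_le; lra.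
have hle : INR n * confine_bound n k m 1 <= INR n ^ 1 * (x / INR n) ^ (k * 1).
  by rewrite pow_1; apply: Rmult_le_compat_l; [lra | apply: confine_bound_le => //; lra].
apply: Rle_trans hle _; rewrite pow_mul_pow_div ?pow_1; [|lra|lia].
apply: Rmult_le_compat_l => //; apply: Rinv_le_contravar; first lra.
by rewrite -{1}(pow_1 (INR n)); apply: Rle_pow => //; apply/leP; lia.
Qed.

Section SmallTerms.
Variables (n k s : nat) (m x : R).
Hypotheses (hn : (1 <= n)%N) (hk : (2 <= k)%N) (hm : 0 <= m).
Hypotheses (hx : 2 * (INR s + m) <= x) (hx1 : 1 <= x).

Let N := INR n.
Let M := N ^ k.-1.
Let u := x ^ k.

Let hN : 1 <= N. Proof. by apply: (le_INR 1); apply/leP. Qed.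
Let hNM : N <= M.
Proof. by rewrite /M -{1}(pow_1 N); apply: Rle_pow => //; apply/leP; lia. Qed.
Let hu : 1 <= u. Proof. exact: pow_R1_Rle. Qed.

Lemma small_term_le_pow :
  INR 'C(n, k.-1) * (INR 'C(n, s) * confine_bound n k m s) <= M * (u / M) ^ s.
Proof.
rewrite -pow_mul_pow_div; [|lra|lia].
have hb := pos_INR 'C(n, s).
apply: Rmult_le_compat; try apply: pos_INR; try apply: binomial_le_pow.
  by apply: Rmult_le_pos => //; apply: confine_bound_ge0 => //; rewrite -/N; lra.
apply: Rmult_le_compat => //; try apply: binomial_le_pow.
  by apply: confine_bound_ge0 => //; rewrite -/N; lra.
by apply: confine_bound_le => //; rewrite -/N; lra.
Qed.

Lemma pair_term_le : s = 2%N ->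
  INR 'C(n, k.-1) * (INR 'C(n, s) * confine_bound n k m s) <= u ^ 3 / N.
Proof.
move=> hs2; apply: Rle_trans small_term_le_pow _; rewrite hs2.
have -> : M * (u / M) ^ 2 = u ^ 2 / M by rewrite /=; field; lra.
have hu23 : u ^ 2 <= u ^ 3 by apply: Rle_pow => //; apply/leP.
apply: Rle_trans (_ : u ^ 3 / M <= _).
  by apply: Rmult_le_compat_r; [left; apply: Rinv_0_lt_compat; lra | lra].
apply: Rmult_le_compat_l; first by apply: pow_le; lra.
by apply: Rinv_le_contravar; lra.
Qed.

Lemma triple_term_le : (3 <= s)%N -> u ^ 3 <= N ->
  INR 'C(n, k.-1) * (INR 'C(n, s) * confine_bound n k m s) <= u ^ 3 / (N * N).
Proof.
move=> hs3 hu3; apply: Rle_trans small_term_le_pow _.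
have hu13 : u <= u ^ 3 by rewrite -{1}(pow_1 u); apply: Rle_pow => //; apply/leP.
have hq : 0 <= u / M <= 1.
  split; first by apply: Rmult_le_pos; [lra | left; apply: Rinv_0_lt_compat; lra].
  by apply: (Rmult_le_reg_r M); [lra | rewrite /Rdiv Rmult_assoc Rinv_l; lra].
apply: Rle_trans (_ : M * (u / M) ^ 3 <= _).
  by apply: Rmult_le_compat_l; [lra | apply: pow_antitone].
have -> : M * (u / M) ^ 3 = u ^ 3 / (M * M) by rewrite /=; field; lra.
apply: Rmult_le_compat_l; first by apply: pow_le; lra.
by apply: Rinv_le_contravar; nra.
Qed.

End SmallTerms.

Lemma exp_fifth_le : exp (1/5) <= 32/25.
Proof.
apply: Rnot_lt_le => h.
have : (32/25) ^ 5 <= exp (1/5) ^ 5 by apply: pow_incr; lra.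
rewrite exp_pow (_ : INR 5 * (1/5) = 1); last by rewrite /=; field.
by have := exp_le_3; rewrite /=; lra.
Qed.

Lemma Rleb_false (a b : R) : ~~ Rleb a b -> b < a.
Proof. by rewrite /Rleb; case: Rle_dec => // h _; lra. Qed.

Lemma c_const_gt0 : 0 < c_const.
Proof. by rewrite /c_const; apply: Rinv_0_lt_compat; have := exp1_gt2; lra. Qed.

(* This is where [c = 1/(8e)] comes from: [25/32 < exp (-1/5)] gives decay in [s]. *)
Lemma large_base_le {k : nat} {y : R} : (2 <= k)%N -> 0 <= y <= c_const ->
  exp 1 * (5/2) ^ k * y ^ k.-1 <= 25/32.
Proof.
move=> hk hy; have he := exp1_gt2.
have [j ->] : exists j, k = j.+2 by exists (k - 2)%N; lia.
have hyc : y ^ j.+1 <= c_const ^ j.+1 by apply: pow_incr.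
apply: Rle_trans (_ : exp 1 * (5/2) ^ j.+2 * c_const ^ j.+1 <= _).
  apply: Rmult_le_compat_l hyc.
  by have := exp_pos 1; have := pow_le (5/2) j.+2; nra.
have hq : 0 <= 5/2 * c_const <= 1.
  have := c_const_gt0; split; first lra.
  apply: (Rmult_le_reg_r (8 * exp 1)); first lra.
  by rewrite /c_const Rmult_assoc Rinv_l; lra.
have -> : exp 1 * (5/2) ^ j.+2 * c_const ^ j.+1 = 25/32 * (5/2 * c_const) ^ j.
  by rewrite Rpow_mult_distr /c_const /=; field; lra.
by have := @pow_le_one _ j hq; have := pow_le _ j (proj1 hq); nra.
Qed.

Lemma large_term_le (n k s : nat) (m l : R) :
  (1 <= n)%N -> (2 <= k)%N -> (1 <= s)%N -> 0 <= m -> 4 * m <= INR s ->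
  INR s < c_const * INR n -> (INR k + 2) * l <= INR s / 5 -> exp l = INR n ->
  INR 'C(n, k.-1) * (INR 'C(n, s) * confine_bound n k m s) <= / INR n ^ 3.
Proof.
move=> hn hk hs hm hms hsc hl hexp.
set N := INR n in hsc hexp *; set M := N ^ k.-1; set y := INR s / N.
have hN : 1 <= N by apply: (le_INR 1); apply/leP.
have hS : 1 <= INR s by apply: (le_INR 1); apply/leP.
have hM : 0 < M by apply: pow_lt; lra.
have hy : 0 <= y <= c_const.
  split; first by apply: Rmult_le_pos; [lra | left; apply: Rinv_0_lt_compat; lra].
  by apply: (Rmult_le_reg_r N); [lra | rewrite /y /Rdiv Rmult_assoc Rinv_l; lra].
have hbase := large_base_le hk hy.
have hb0 : 0 <= exp 1 * (5/2) ^ k * y ^ k.-1.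
  apply: Rmult_le_pos; last by apply: pow_le; case: hy.
  by apply: Rmult_le_pos; [have := exp_pos 1 | apply: pow_le]; lra.
have hterm : INR 'C(n, k.-1) * (INR 'C(n, s) * confine_bound n k m s) <=
             M * (exp 1 * (5/2) ^ k * y ^ k.-1) ^ s.
  have -> : (exp 1 * (5/2) ^ k * y ^ k.-1) ^ s =
            (exp 1 * N / INR s) ^ s * (5/2 * INR s / N) ^ (k * s).
    rewrite pow_mult -Rpow_mult_distr; f_equal.
    rewrite (_ : 5/2 * INR s / N = 5/2 * y); last by rewrite /y; field; lra.
    rewrite Rpow_mult_distr -[in y ^ k](prednK (ltnW hk)) /= /y.
    by field; split; lra.
  have hc0 := @confine_bound_ge0 n k m s (ltac:(rewrite -/N; lra)) hm.
  apply: Rmult_le_compat; try apply: pos_INR; try apply: binomial_le_pow.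
    by apply: Rmult_le_pos => //; apply: pos_INR.
  apply: Rmult_le_compat => //; try apply: pos_INR.
    exact: binomial_le_exp_pow.
  by apply: confine_bound_le; rewrite -/N; lra.
have hdecay : (25/32) ^ s * exp (INR s / 5) <= 1.
  rewrite (_ : INR s / 5 = INR s * (1/5)); last by field.
  rewrite -exp_pow -Rpow_mult_distr; apply: pow_le_one.
  by have := exp_fifth_le; have := exp_pos (1/5); split; nra.
have hNk : M * N ^ 3 <= exp (INR s / 5).
  rewrite /M -pow_add -hexp exp_pow; apply: exp_le_exp.
  by rewrite (_ : (k.-1 + 3)%coq_nat = (k + 2)%N) ?plus_INR; [rewrite [INR 2]/=; lra | lia].
have hN3 : 0 < N ^ 3 by apply: pow_lt; lra.
have he := exp_pos (INR s / 5).
apply: Rle_trans hterm _.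
apply: Rle_trans (_ : M * (25/32) ^ s <= _).
  by apply: Rmult_le_compat_l; [lra | apply: pow_incr].
apply: (Rmult_le_reg_r (exp (INR s / 5))) => //.
apply: Rle_trans (_ : M * 1 <= _); first by have := pow_le (25/32) s; nra.
rewrite Rmult_1_r; apply: (Rmult_le_reg_r (N ^ 3)) => //.
by rewrite (Rmult_comm (/ _)) Rmult_assoc Rinv_l; lra.
Qed.

(* Sizes of a failure witness [(A, T)]: an isolated vertex [T] of [G_k'] with [A]
   empty, or [#|A| = k - 1] and [2 <= #|T| < c n]. *)
Definition bad_pair {n : nat} (k : nat) (P : {set 'I_n} * {set 'I_n}) : bool :=
  ((P.1 == set0) && (#|P.2| == 1%N)) ||
  [&& #|P.1| == k.-1, (2 <= #|P.2|)%N & ~~ Rleb (c_const * INR n) (INR #|P.2|)].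

(* The union bound over all [bad_pair]s, grouped by [#|T|] (see [sum_bad_pairs_le]). *)
Definition bad_sum (n k : nat) (m : R) : R :=
  INR n * confine_bound n k m 1 + INR 'C(n, k.-1) *
    \big[Rplus/0]_(s < n.+1 | (2 <= s)%N && ~~ Rleb (c_const * INR n) (INR s))
       (INR 'C(n, s) * confine_bound n k m s).

Section BadSum.
Variables (n k : nat) (m l x : R).
Hypotheses (hn : (1 <= n)%N) (hk : (2 <= k)%N) (hm : 0 <= m) (hl : 0 <= l).
Hypotheses (hexp : exp l = INR n) (hx : 2 * (1 + 5 * m + 5 * (INR k + 2) * l) <= x).
Hypothesis hP : (x ^ k) ^ 3 <= INR n.

Let P := (x ^ k) ^ 3.
Let N := INR n.

Let hN : 1 <= N. Proof. by apply: (le_INR 1); apply/leP. Qed.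
Let hkl : 0 <= (INR k + 2) * l.
Proof. by apply: Rmult_le_pos => //; have := pos_INR k; lra. Qed.
Let hx1 : 1 <= x. Proof. lra. Qed.
Let hP1 : 1 <= P. Proof. by do 2 apply: pow_R1_Rle. Qed.

Lemma bad_term_le (s : nat) : (2 <= s)%N -> INR s < c_const * N ->
  INR 'C(n, k.-1) * (INR 'C(n, s) * confine_bound n k m s) <=
  if s == 2%N then P / N else P / (N * N).
Proof.
move=> hs hsc; have hPN : P / (N * N) <= P / N.
  by apply: Rmult_le_compat_l; [lra | apply: Rinv_le_contravar; nra].
case: (Rlt_le_dec (INR s) (4 * m + 5 * (INR k + 2) * l)) => hsb.
  have hsx : 2 * (INR s + m) <= x by lra.
  by case: eqP => [/pair_term_le | hs2]; [apply | apply: triple_term_le => //; lia].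
have hlarge : INR 'C(n, k.-1) * (INR 'C(n, s) * confine_bound n k m s) <= / N ^ 3.
  by apply: (@large_term_le n k s m l) => //; try lia; lra.
have hcube : / N ^ 3 <= P / (N * N).
  have hNN := Rinv_0_lt_compat _ (ltac:(nra) : 0 < N * N).
  have hN1 : / N <= 1 by rewrite -Rinv_1; apply: Rinv_le_contravar; lra.
  have -> : / N ^ 3 = / N * / (N * N) by rewrite /=; field; lra.
  by rewrite /Rdiv; nra.
by case: eqP => _; lra.
Qed.

Lemma bad_sum_le : bad_sum n k m <= 4 * P / N.
Proof.
have hN0 : 0 < N by lra.
have hPN : P <= N := hP.
have hxk : x ^ k <= P.
  by rewrite /P -{1}(pow_1 (x ^ k)); apply: Rle_pow; [apply: pow_R1_Rle | apply/leP].
have hn2 : (2 <= n)%N.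
  apply/leP; apply: INR_le; rewrite -/N [INR 2]/=.
  have : x <= x ^ k by rewrite -{1}(pow_1 x); apply: Rle_pow => //; apply/leP; lia.
  lra.
have hsingle : N * confine_bound n k m 1 <= P / N.
  apply: Rle_trans (@singleton_term_le n k m x hn hk hm _) _; first lra.
  by apply: Rmult_le_compat_r; [left; apply: Rinv_0_lt_compat | ].
pose g (s : 'I_n.+1) := if s == 2%N :> nat then P / N else P / (N * N).
have hg : forall s : 'I_n.+1, 0 <= g s.
  by move=> s; rewrite /g; case: eqP => _; apply: Rmult_le_pos; try lra;
    left; apply: Rinv_0_lt_compat; nra.
have hsum : \big[Rplus/0]_(s < n.+1 | (2 <= s)%N && ~~ Rleb (c_const * N) (INR s))
      (INR 'C(n, k.-1) * (INR 'C(n, s) * confine_bound n k m s)) <= 3 * P / N.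
  apply: Rle_trans (_ : \big[Rplus/0]_(s < n.+1) g s <= _).
    apply: Rle_trans (@big_Rle_sub _ _ g hg).
    by apply: big_Rle => s /andP [hs /Rleb_false hsc]; apply: bad_term_le.
  have h2 : nat_of_ord (inord 2 : 'I_n.+1) = 2%N by rewrite inordK //; lia.
  rewrite (bigD1 (inord 2)) //= {1}/g h2 eqxx.
  rewrite (eq_bigr (fun _ => P / (N * N))); last first.
    by move=> s hs; rewrite /g ifN //; apply: contra hs => /eqP hs2; apply/eqP/val_inj; rewrite /= h2.
  rewrite big_Rconst cardC1 card_ord -/N.
  have -> : N * (P / (N * N)) = P / N by field; lra.
  have : 0 <= P / N by apply: Rmult_le_pos; [lra | left; apply: Rinv_0_lt_compat].
  by rewrite /Rdiv; lra.
rewrite /bad_sum big_distrr /= -/N.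
apply: Rle_trans (Rplus_le_compat _ _ _ _ hsingle hsum) _.
by right; field; lra.
Qed.

End BadSum.

Lemma pow_mul_le_exp (K d l : R) (j : nat) : 0 < K -> 0 < d -> (0 < j)%N ->
  0 <= l -> 2 * ln ((2 * INR j * K) ^ j / d) <= l -> (K * l) ^ j <= d * exp l.
Proof.
move=> hK hd hj hl hlj; have hJ : 0 < INR j by apply: lt_0_INR; apply/ltP.
set B := (2 * INR j * K) ^ j in hlj *.
have hB : 0 < B by apply: pow_lt; nra.
have hsplit : (K * l) ^ j = B * (l / 2 / INR j) ^ j.
  by rewrite /B -Rpow_mult_distr; f_equal; field; lra.
have hpow : (l / 2 / INR j) ^ j <= exp (l / 2) by apply: pow_div_le_exp => //; lra.
have hBd : B <= d * exp (l / 2).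
  have hBd0 : 0 < B / d by apply: Rdiv_lt_0_compat.
  have : B / d <= exp (l / 2) by rewrite -(exp_ln (B / d)) //; apply: exp_le_exp; lra.
  move=> h; rewrite -[B](Rmult_div_r d B) -?Rmult_div_assoc; last lra.
  by apply: Rmult_le_compat_l; lra.
have -> : exp l = exp (l / 2) * exp (l / 2) by rewrite -exp_plus; f_equal; field.
rewrite hsplit; have := exp_pos (l / 2); have := pow_le (l / 2 / INR j) j.
have : 0 <= l / 2 / INR j by apply: Rmult_le_pos; [lra | left; apply: Rinv_0_lt_compat].
by move=> h0 h1 h2; nra.
Qed.

Lemma bad_sum_vanishes (eps delta : R) (k : nat) :
  0 < eps -> (2 <= k)%N -> 0 < delta ->
  exists N : nat, forall n : nat, (N <= n)%N -> forall m : R, 0 <= m ->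
    m <= 12 / eps * ln (INR n) + INR k -> bad_sum n k m <= delta.
Proof.
move=> heps hk hdelta.
have hkR : 2 <= INR k by apply: (le_INR 2); apply/leP.
set a := 12 / eps + 1.
have ha : 1 <= a by rewrite /a; have := Rdiv_lt_0_compat 12 eps ltac:(lra) heps; lra.
set K := 2 * (1 + 5 * a + 5 * (INR k + 2)).
set d := Rmin delta 1 / 4.
have hd : 0 < d by rewrite /d; apply: Rdiv_lt_0_compat; [apply: Rmin_glb_lt |]; lra.
set Y := Rmax (INR k) (Rmax 1 (2 * ln ((2 * INR (k * 3) * K) ^ (k * 3) / d))).
have [N0 hN0] := INR_unbounded (exp Y).
exists N0 => n hn m hm0 hm.
have hN0n : INR N0 <= INR n by apply: le_INR; apply/leP.
have hnY : exp Y < INR n by lra.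
set l := ln (INR n) in hm *.
have hexp : exp l = INR n by apply: exp_ln; have := exp_pos Y; lra.
have hYl : Y <= l by left; apply: exp_lt_inv; rewrite hexp.
have hkl : INR k <= l by apply: Rle_trans (Rmax_l _ _) hYl.
have hYr := Rle_trans _ _ _ (Rmax_r _ _) hYl.
have hl1 : 1 <= l by apply: Rle_trans (Rmax_l _ _) hYr.
have hlj := Rle_trans _ _ _ (Rmax_r _ _) hYr.
have hx : 2 * (1 + 5 * m + 5 * (INR k + 2) * l) <= K * l.
  have : m <= a * l by rewrite /a Rmult_plus_distr_r Rmult_1_l; lra.
  by rewrite /K; nra.
have hP : ((K * l) ^ k) ^ 3 <= d * INR n.
  rewrite -pow_mult -hexp; apply: pow_mul_le_exp => //; try lia; try lra.
  by rewrite /K; nra.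
have hn1 : (1 <= n)%N.
  by apply/leP; apply: INR_le; rewrite [INR 1]/=; have := exp_ineq1_le l; lra.
have hd1 : d <= 1 / 4 by rewrite /d; have := Rmin_r delta 1; lra.
have hdd : 4 * d <= delta by rewrite /d; have := Rmin_l delta 1; lra.
have hn0 : 0 < INR n by apply: lt_0_INR; apply/ltP.
have hdn : d * INR n <= INR n.
  by rewrite -[X in _ <= X]Rmult_1_l; apply: Rmult_le_compat_r; lra.
apply: Rle_trans (@bad_sum_le n k m l (K * l) hn1 hk hm0 (ltac:(lra)) hexp hx _) _; first lra.
apply: (Rmult_le_reg_r (INR n)); first lra.
rewrite /Rdiv Rmult_assoc Rinv_l; last lra.
apply: Rle_trans (_ : 4 * (d * INR n) <= _); first lra.
by rewrite -Rmult_assoc; apply: Rmult_le_compat_r; lra.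
Qed.

(** * Outcomes of the random process *)

Definition confined {n k : nat} (T X : {set 'I_n}) : pred (choices n k) :=
  fun w => [forall v in T, forall i, w v i \in T :|: X].

Section Counting.
Variables (n k : nat) (e : rel 'I_n).

Lemma card_choices_in (D : 'I_n -> {set 'I_n}) :
  #|[set w : choices n k | [forall v, forall i, w v i \in D v]]| =
  (\prod_v #|D v| ^ k)%N.
Proof.
have -> : #|[set w : choices n k | [forall v, forall i, w v i \in D v]]| =
    #|(family (fun v => ffun_on (D v)) : simpl_pred (choices n k))|.
  apply: eq_card => w; rewrite inE; apply/forallP/familyP => h v.
    by apply/ffun_onP => i; apply: (forallP (h v) i).
  by apply/forallP => i; apply: (ffun_onP (h v) i).
rewrite card_family foldrE big_map big_enum; apply: eq_bigr => v _.
by rewrite card_ffun_on card_ord.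
Qed.

Lemma mem_nbhd (v u : 'I_n) : (u \in nbhd e v) = e v u.
Proof. by rewrite inE. Qed.

Lemma card_Omega : #|Omega k e| = (\prod_v #|nbhd e v| ^ k)%N.
Proof.
rewrite -card_choices_in; apply: eq_card => w; rewrite !inE.
by apply: eq_forallb => v; apply: eq_forallb => i; rewrite mem_nbhd.
Qed.

Lemma card_confined (T X : {set 'I_n}) :
  #|[set w in Omega k e | confined T X w]| =
  (\prod_v #|if v \in T then nbhd e v :&: (T :|: X) else nbhd e v| ^ k)%N.
Proof.
rewrite -card_choices_in; apply: eq_card => w; rewrite !inE.
apply/andP/forallP => [[/forallP hw /forallP hT] v | h].
  apply/forallP => i; case: ifP => hv; rewrite ?in_setI mem_nbhd (forallP (hw v) i) //.
  exact: (forallP (implyP (hT v) hv) i).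
split; apply/forallP => v.
  apply/forallP => i; have := forallP (h v) i.
  by case: ifP => _; rewrite ?in_setI mem_nbhd // => /andP [].
apply/implyP => hv; apply/forallP => i; have := forallP (h v) i.
by rewrite hv in_setI => /andP [].
Qed.

Hypothesis hdeg : forall v, (n <= 2 * #|nbhd e v|)%N.

Lemma card_confined_le (T X : {set 'I_n}) :
  (#|[set w in Omega k e | confined T X w]| * n ^ (k * #|T|) <=
   #|Omega k e| * (2 * #|T :|: X|) ^ (k * #|T|))%N.
Proof.
rewrite card_confined card_Omega !expnM -!prod_nat_const.
rewrite !(big_mkcond (fun v => v \in T)) -!big_split /=.
apply: leq_prod => v _; case: ifP => hv; last by rewrite !muln1.
rewrite -!expnMn; case: (posnP k) => [-> // | hk]; rewrite leq_exp2r //.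
apply: leq_trans (leq_mul (subset_leq_card (subsetIr (nbhd e v) (T :|: X))) (hdeg v)) _.
by rewrite (mulnCA #|T :|: X|) (mulnCA #|nbhd e v|) (mulnC #|T :|: X|).
Qed.

Hypothesis hn : (0 < n)%N.

Lemma card_Omega_gt0 : (0 < #|Omega k e|)%N.
Proof.
rewrite card_Omega prodn_gt0 // => v; rewrite expn_gt0.
by have := hdeg v; lia.
Qed.

Lemma prob_confined_le (T X : {set 'I_n}) :
  INR #|[set w in Omega k e | confined T X w]| / INR #|Omega k e| <=
  (2 * INR #|T :|: X| / INR n) ^ (k * #|T|).
Proof.
have hO : 0 < INR #|Omega k e| by apply: lt_0_INR; apply/ltP; apply: card_Omega_gt0.
have hN : 0 < INR n ^ (k * #|T|) by apply: pow_lt; apply: lt_0_INR; apply/ltP.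
have hcard := card_confined_le T X.
have : INR #|[set w in Omega k e | confined T X w]| * INR n ^ (k * #|T|) <=
       INR #|Omega k e| * (2 * INR #|T :|: X|) ^ (k * #|T|).
  rewrite (_ : 2 * INR _ = INR (2 * #|T :|: X|)); last by rewrite mult_INR.
  by rewrite -!INR_expn -!mult_INR; apply: le_INR; apply/leP.
move=> h; rewrite /Rdiv Rpow_mult_distr pow_inv.
apply: (Rmult_le_reg_r (INR #|Omega k e| * INR n ^ (k * #|T|))); first nra.
have -> : INR #|[set w in Omega k e | confined T X w]| * / INR #|Omega k e| *
    (INR #|Omega k e| * INR n ^ (k * #|T|)) =
    INR #|[set w in Omega k e | confined T X w]| * INR n ^ (k * #|T|) by field; lra.
have -> : (2 * INR #|T :|: X|) ^ (k * #|T|) * / INR n ^ (k * #|T|) *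
    (INR #|Omega k e| * INR n ^ (k * #|T|)) =
    INR #|Omega k e| * (2 * INR #|T :|: X|) ^ (k * #|T|) by field; lra.
exact: h.
Qed.

End Counting.

Lemma prob_compl (n k : nat) (e : rel 'I_n) (E : pred (choices n k)) :
  (0 < #|Omega k e|)%N ->
  prob e E = 1 - INR #|[set w in Omega k e | ~~ E w]| / INR #|Omega k e|.
Proof.
move=> hO; have hOR : 0 < INR #|Omega k e| by apply: lt_0_INR; apply/ltP.
have hcard : (#|[set w in Omega k e | E w]| + #|[set w in Omega k e | ~~ E w]| =
              #|Omega k e|)%N.
  rewrite -(cardsID [set w | E w] (Omega k e)).
  by congr (_ + _)%N; apply: eq_card => w; rewrite !inE // andbC.
have hcR := f_equal INR hcard; rewrite plus_INR in hcR.
by rewrite /prob -hcR; field; lra.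
Qed.

Section Components.
Variables (n k : nat) (w : choices n k).

Lemma mem_comp_self (S : {set 'I_n}) (r : rel 'I_n) (v : 'I_n) : v \in comp S r v.
Proof. by rewrite inE connect0. Qed.

Lemma mem_comp (S : {set 'I_n}) (r : rel 'I_n) (v u : 'I_n) :
  v \in S -> u \in comp S r v -> u \in S.
Proof.
move=> hv; rewrite inE => /connectP [p hp ->] {u}.
elim: p v hv hp => [|y p IH] v hv //= /andP [/and3P [_ hy _] hp].
exact: IH hy hp.
Qed.

Lemma comp_confined (S : {set 'I_n}) (v : 'I_n) :
  v \in S -> confined (comp S (gk w) v) (~: S) w.
Proof.
move=> hv; apply/forallP => u; apply/implyP => hu; apply/forallP => i.
rewrite in_setU in_setC; case hS: (w u i \in S); last by rewrite orbT.
rewrite orbF; move: (hu); rewrite !inE => hvu.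
apply: connect_trans hvu (connect1 _); apply/and3P; split => //.
  exact: mem_comp hv hu.
by apply/orP; left; apply/existsP; exists i.
Qed.

Lemma confinedS (T X Y : {set 'I_n}) : X \subset Y -> confined T X w -> confined T Y w.
Proof.
move=> hXY /forallP h; apply/forallP => v; apply/implyP => hv; apply/forallP => i.
have := forallP (implyP (h v) hv) i; rewrite !in_setU => /orP [-> // | hx].
by rewrite (subsetP hXY _ hx) orbT.
Qed.

End Components.

Lemma bad_pair_of_not_good {n k : nat} {L : {set 'I_n}} {w : choices n k} :
  (k.-1 <= n)%N -> ~~ good_event L w ->
  exists2 P, bad_pair k P & confined P.2 (L :|: P.1) w.
Proof.
move=> hkn; rewrite negb_and => /orP [|].
  rewrite negb_forall => /existsP [v]; rewrite negb_imply => /andP [hv hsmall].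
  set T := comp (~: L) (gk w) v in hsmall *.
  have hT : confined T L w by rewrite -[L in confined _ L]setCK; apply: comp_confined.
  have hT0 : (0 < #|T|)%N by apply/card_gt0P; exists v; apply: mem_comp_self.
  have [hT1 | hT1] := eqVneq #|T| 1%N.
    by exists (set0, T); rewrite /bad_pair /= ?eqxx ?hT1 ?setU0.
  (* a small component of [G_k'] stays confined after adding any [A] to [L] *)
  have [A /eqP hA] : exists A : {set 'I_n}, #|A| == k.-1.
    have : (0 < #|[set A : {set 'I_n} | #|A| == k.-1]|)%N.
      by rewrite card_draws card_ord bin_gt0.
    by case/card_gt0P => A; rewrite inE; exists A.
  exists (A, T); last by apply: confinedS hT; apply: subsetUl.
  by rewrite /bad_pair /= hA eqxx hsmall /= andbT ltn_neqAle (eq_sym 1%N) hT1 hT0 orbT.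
rewrite negb_forall => /existsP [A]; rewrite negb_imply => /andP [/andP [_ hA]].
rewrite negb_forall => /existsP [v]; rewrite negb_imply negb_or.
move=> /andP [hv /andP [hT1 hsmall]].
exists (A, comp (~: L :\: A) (gk w) v).
  rewrite /bad_pair /= hA hsmall andbT ltn_neqAle (eq_sym 1%N) hT1 /=.
  by apply/orP; right; apply/card_gt0P; exists v; apply: mem_comp_self.
by rewrite /= (_ : L :|: A = ~: (~: L :\: A)); [apply: comp_confined | rewrite setDE setCI !setCK].
Qed.

Lemma card_bigcup_le (I U : finType) (P : pred I) (F : I -> {set U}) :
  (#|\bigcup_(i | P i) F i| <= \sum_(i | P i) #|F i|)%N.
Proof.
elim/big_rec2: _ => [|i m B _ hB]; first by rewrite cards0.
by apply: leq_trans (leq_card_setU _ _).1 _; rewrite leq_add2l.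
Qed.

Lemma card_sets_of_size (n j : nat) : #|(fun T : {set 'I_n} => #|T| == j)| = 'C(n, j).
Proof. by rewrite -[n in 'C(n, _)]card_ord -card_draws; apply: eq_card => T; rewrite inE. Qed.

Lemma sum_by_card (n : nat) (p : pred nat) (g : nat -> R) :
  \big[Rplus/0]_(T : {set 'I_n} | p #|T|) g #|T| =
  \big[Rplus/0]_(s < n.+1 | p s) (INR 'C(n, s) * g s).
Proof.
have hT (T : {set 'I_n}) : (#|T| < n.+1)%N.
  by rewrite ltnS -[n in (_ <= n)%N]card_ord max_card.
rewrite (partition_big (fun T : {set 'I_n} => inord #|T| : 'I_n.+1) (fun s => p s)); last first.
  by move=> T hp; rewrite inordK.
apply: eq_bigr => s hs.
rewrite (eq_bigl (fun T : {set 'I_n} => #|T| == s)); last first.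
  move=> T; have -> : (inord #|T| == s :> 'I_n.+1) = (#|T| == s).
    by apply/eqP/eqP => [<- | h]; [rewrite inordK | apply: val_inj; rewrite /= inordK].
  by case: eqP => [-> | _]; rewrite ?hs ?andbF.
rewrite (eq_bigr (fun _ => g s)); last by move=> T /eqP ->.
by rewrite big_Rconst card_sets_of_size.
Qed.

Lemma sum_bad_pairs_le (n k : nat) (h : nat -> R) : (forall s, 0 <= h s) ->
  \big[Rplus/0]_(P : {set 'I_n} * {set 'I_n} | bad_pair k P) h #|P.2| <=
  INR n * h 1%N + INR 'C(n, k.-1) *
    \big[Rplus/0]_(s < n.+1 | (2 <= s)%N && ~~ Rleb (c_const * INR n) (INR s))
       (INR 'C(n, s) * h s).
Proof.
move=> h0.
apply: Rle_trans (@big_Ror _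
  (fun P : {set 'I_n} * {set 'I_n} => (P.1 == set0) && (#|P.2| == 1%N))
  (fun P => [&& #|P.1| == k.-1, (2 <= #|P.2|)%N & ~~ Rleb (c_const * INR n) (INR #|P.2|)])
  (fun P => h #|P.2|) (fun P => h0 _)) _.
apply: Rplus_le_compat; right.
  rewrite -(pair_big_dep (fun A : {set 'I_n} => A == set0) (fun A (T : {set 'I_n}) => #|T| == 1%N)
    (fun A (T : {set 'I_n}) => h #|T|)) big_pred1_eq.
  rewrite (eq_bigr (fun _ => h 1%N)); last by move=> T /eqP ->.
  by rewrite big_Rconst card_sets_of_size bin1.
rewrite -(pair_big_dep (fun A : {set 'I_n} => #|A| == k.-1)
  (fun A (T : {set 'I_n}) => (2 <= #|T|)%N && ~~ Rleb (c_const * INR n) (INR #|T|))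
  (fun A (T : {set 'I_n}) => h #|T|)).
by rewrite big_Rconst card_sets_of_size
  (sum_by_card n (fun s => (2 <= s)%N && ~~ Rleb (c_const * INR n) (INR s))).
Qed.

Lemma prob_not_good_le (n k : nat) (e : rel 'I_n) (L : {set 'I_n}) :
  (forall v, n <= 2 * #|nbhd e v|)%N -> (0 < n)%N -> (k <= n)%N ->
  INR #|[set w in Omega k e | ~~ good_event L w]| / INR #|Omega k e| <=
  bad_sum n k (INR #|L| + INR k).
Proof.
move=> hdeg hn hkn; set m := INR #|L| + INR k.
have hO : 0 < INR #|Omega k e| by apply: lt_0_INR; apply/ltP; apply: card_Omega_gt0.
have hnR : 0 < INR n by apply: lt_0_INR; apply/ltP.
have hm : 0 <= m by have := pos_INR #|L|; have := pos_INR k; rewrite /m; lra.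
pose conf (P : {set 'I_n} * {set 'I_n}) :=
  [set w in Omega k e | confined P.2 (L :|: P.1) w].
have hunion : (#|[set w in Omega k e | ~~ good_event L w]| <=
               \sum_(P | bad_pair k P) #|conf P|)%N.
  apply: leq_trans (@card_bigcup_le _ _ (bad_pair k) conf); apply: subset_leq_card.
  apply/subsetP => w.
  rewrite inE => /andP [hw hbad].
  have [P hP hc] := bad_pair_of_not_good (leq_trans (leq_pred k) hkn) hbad.
  by apply/bigcupP; exists P => //; rewrite inE hw.
have hpair P : bad_pair k P ->
    INR #|conf P| / INR #|Omega k e| <= confine_bound n k m #|P.2|.
  move=> hP; apply: Rle_trans (@prob_confined_le n k e hdeg hn P.2 (L :|: P.1)) _.
  have hA : (#|P.1| <= k)%N.
    by case/orP: hP => [/andP [/eqP -> _] | /and3P [/eqP -> _ _]]; rewrite ?cards0 ?leq_pred.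
  have hU : INR #|P.2 :|: (L :|: P.1)| <= INR #|P.2| + m.
    rewrite /m -!plus_INR; apply: le_INR; apply/leP; rewrite !plusE.
    apply: leq_trans (leq_card_setU _ _).1 _; rewrite leq_add2l.
    by apply: leq_trans (leq_card_setU _ _).1 _; rewrite leq_add2l.
  apply: pow_incr; have := pos_INR #|P.2 :|: (L :|: P.1)|; have := Rinv_0_lt_compat _ hnR.
  by rewrite /Rdiv; split; nra.
apply: Rle_trans (_ : \big[Rplus/0]_(P | bad_pair k P) confine_bound n k m #|P.2| <= _).
  apply: Rle_trans (_ : INR (\sum_(P | bad_pair k P) #|conf P|) / INR #|Omega k e| <= _).
    by apply: Rmult_le_compat_r; [left; apply: Rinv_0_lt_compat | apply: le_INR; apply/leP].
  rewrite (big_morph INR plus_INR (erefl (INR 0))) /Rdiv big_distrl /=.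
  exact: big_Rle.
by apply: sum_bad_pairs_le => s; apply: confine_bound_ge0.
Qed.

Theorem lemma2 (eps : R) (k : nat) :
  0 < eps -> (2 <= k)%N ->
  forall delta : R, 0 < delta ->
  exists N : nat, forall (n : nat) (e : rel 'I_n) (L : {set 'I_n}),
    (N <= n)%N ->
    symmetric e -> irreflexive e ->
    (forall v : 'I_n, (1/2 + eps) * INR n <= INR #|nbhd e v|) ->
    INR #|L| <= (12 / eps) * ln (INR n) ->
    (forall u w : 'I_n, u \notin L -> w \notin L -> u != w ->
       12 * ln (INR n) <= INR #|[set x in L | e u x && e w x]|) ->
    1 - delta <= @prob n k e (@good_event n k L).
Proof.
move=> heps hk delta hdelta.
have [N hN] := @bad_sum_vanishes eps delta k heps hk hdelta.
exists (maxn N k) => n e L; rewrite geq_max => /andP [hNn hkn] _ _ hdeg hL _.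
have hn : (0 < n)%N by lia.
have hdeg2 v : (n <= 2 * #|nbhd e v|)%N.
  apply/leP; apply: INR_le; rewrite mult_INR [INR 2]/=.
  by have := hdeg v; have := pos_INR n; nra.
have hbad := @prob_not_good_le n k e L hdeg2 hn hkn.
have hsum := hN n hNn (INR #|L| + INR k) (ltac:(have := pos_INR #|L|; have := pos_INR k; lra))
  (ltac:(lra)).
rewrite prob_compl; first lra.
exact: card_Omega_gt0.
Qed.
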